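(* Let $\mathcal L$ be an expansion of the language of ordered groups and let $G$ be an $\mathcal L$-structure whose reduct is a densely ordered abelian group which is definably complete. Fix an $\mathcal L$-formula $\psi(t,y)$ (possibly with parameters) such that each set $\psi(t,G)$, $t\in G$, is pseudo-finite, $\psi(t_1,G)\subseteq\psi(t_2,G)$ whenever $t_1<t_2$, and $\bigcup_{t\in G}\psi(t,G)=G$. Then for all $a<b$ in $G$, the interval $[a,b]$ is definably compact (with respect to $\psi$): for every $\mathcal L$-formula $\varphi(x,y)$ (with parameters) such that each $\varphi(u,G)$, $u\in G$, is open and $[a,b]\subseteq\bigcup_{u\in G}\varphi(u,G)$, there exists $t_0\in G$ with $[a,b]\subseteq\bigcup_{u\in\psi(t_0,G)}\varphi(u,G)$.
   Context: Definable means definable by an $\mathcal L$-formula with parameters from $G$; for a formula $\varphi(x,y)$ and $a\in G$, $\varphi(a,G)=\{b\in G: G\models\varphi(a,b)\}$. $G$ carries the order topology (base: open intervals). A Dedekind cut is a nonempty downward closed subset of $G$; a gap is a cut $C\ne G$ with no least upper bound in $G$; $G$ is definably complete if it has no definable gap. A definable subset $D\subseteq G$ is pseudo-finite if it is discrete, closed, and bounded. *)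

From Stdlib Require Import Arith.

Set Implicit Arguments.

Record DOAG (G : Type) (add : G -> G -> G) (opp : G -> G) (zero : G)
    (lt : G -> G -> Prop) : Prop := {
  doag_addA : forall x y z, add x (add y z) = add (add x y) z;
  doag_addC : forall x y, add x y = add y x;
  doag_add0 : forall x, add x zero = x;
  doag_addN : forall x, add x (opp x) = zero;
  doag_irrefl : forall x, ~ lt x x;
  doag_trans : forall x y z, lt x y -> lt y z -> lt x z;
  doag_total : forall x y, lt x y \/ x = y \/ lt y x;
  doag_compat : forall x y z, lt x y -> lt (add x z) (add y z);
  doag_dense : forall x y, lt x y -> exists z, lt x z /\ lt z y
}.

Definition upd (G : Type) (s : nat -> G) (i : nat) (g : G) : nat -> G :=
  fun j => if Nat.eqb j i then g else s j.

(* [Def] is the family of all sets definable (with parameters) in some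
   expansion of the language of ordered groups.  A definable set is given as a
   predicate on assignments s : nat -> G that depends only on finitely many
   variables.  The closure conditions are exactly those of the collection of
   sets defined by first-order formulas with parameters (atomic formulas of the
   ordered-group language, parameters, negation, conjunction, existential
   quantification); conversely any such collection is the collection of
   definable sets of the expansion naming all its members. *)
Record DefStructure (G : Type) (add : G -> G -> G) (opp : G -> G)
    (lt : G -> G -> Prop) (Def : ((nat -> G) -> Prop) -> Prop) : Prop := {
  def_finsupp : forall A, Def A -> exists n, forall s s' : nat -> G,
      (forall i, i < n -> s i = s' i) -> (A s <-> A s');
  def_ext : forall A B, (forall s, A s <-> B s) -> Def A -> Def B;
  def_not : forall A, Def A -> Def (fun s => ~ A s);
  def_and : forall A B, Def A -> Def B -> Def (fun s => A s /\ B s);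
  def_exists : forall A i, Def A -> Def (fun s => exists g, A (upd s i g));
  def_eq : forall i j, Def (fun s => s i = s j);
  def_const : forall i (c : G), Def (fun s => s i = c);
  def_lt : forall i j, Def (fun s => lt (s i) (s j));
  def_add : forall i j k, Def (fun s => add (s i) (s j) = s k);
  def_opp : forall i j, Def (fun s => opp (s i) = s j)
}.

Definition def_set (G : Type) (Def : ((nat -> G) -> Prop) -> Prop)
  (C : G -> Prop) : Prop := Def (fun s => C (s 0)).

Definition le_of (G : Type) (lt : G -> G -> Prop) (x y : G) : Prop :=
  lt x y \/ x = y.

Definition is_open (G : Type) (lt : G -> G -> Prop) (U : G -> Prop) : Prop :=
  forall x, U x -> exists c d, lt c x /\ lt x d /\
    (forall y, lt c y -> lt y d -> U y).

Definition is_closed (G : Type) (lt : G -> G -> Prop) (D : G -> Prop) : Prop :=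
  is_open lt (fun x => ~ D x).

Definition is_discrete (G : Type) (lt : G -> G -> Prop) (D : G -> Prop) : Prop :=
  forall x, D x -> exists c d, lt c x /\ lt x d /\
    (forall y, lt c y -> lt y d -> D y -> y = x).

Definition is_bounded (G : Type) (lt : G -> G -> Prop) (D : G -> Prop) : Prop :=
  exists c d, forall x, D x -> le_of lt c x /\ le_of lt x d.

Definition pseudo_finite (G : Type) (lt : G -> G -> Prop)
  (Def : ((nat -> G) -> Prop) -> Prop) (D : G -> Prop) : Prop :=
  def_set Def D /\ is_discrete lt D /\ is_closed lt D /\ is_bounded lt D.

Definition is_cut (G : Type) (lt : G -> G -> Prop) (C : G -> Prop) : Prop :=
  (exists x, C x) /\ (forall x y, C y -> le_of lt x y -> C x).

Definition is_lub (G : Type) (lt : G -> G -> Prop) (C : G -> Prop) (m : G)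
  : Prop :=
  (forall x, C x -> le_of lt x m) /\
  (forall m', (forall x, C x -> le_of lt x m') -> le_of lt m m').

Definition is_gap (G : Type) (lt : G -> G -> Prop) (C : G -> Prop) : Prop :=
  is_cut lt C /\ (exists x, ~ C x) /\ ~ (exists m, is_lub lt C m).

Definition definably_complete (G : Type) (lt : G -> G -> Prop)
  (Def : ((nat -> G) -> Prop) -> Prop) : Prop :=
  forall C, def_set Def C -> ~ is_gap lt C.

(** The set of points [x] such that [[a, x]] is covered by the sets [phi u]
    with [u] ranging over a single [psi t] is a definable cut.  Because the
    family [psi t] is increasing and exhausts [G], two such covers can be
    merged into one, and a cover of [[a, x]] can be extended past any point
    [m] lying in an open set [phi u]; hence the cut has no supremum in
    [[a, b]].  By definable completeness it is not a gap, so it contains [b]. *)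

From Stdlib Require Import Classical Arith Lia.

Set Implicit Arguments.
Unset Strict Implicit.

Section Definability.
Variables (G : Type) (add : G -> G -> G) (opp : G -> G)
  (lt : G -> G -> Prop) (Def : ((nat -> G) -> Prop) -> Prop).
Hypothesis HDef : DefStructure add opp lt Def.

Lemma def_or A B : Def A -> Def B -> Def (fun s => A s \/ B s).
Proof.
  intros HA HB.
  apply (def_ext HDef (fun s => ~ (~ A s /\ ~ B s))).
  - intro s; split; [intro h; apply NNPP; tauto | tauto].
  - apply (def_not HDef), (def_and HDef); apply (def_not HDef); assumption.
Qed.

Lemma def_imp A B : Def A -> Def B -> Def (fun s => A s -> B s).
Proof.
  intros HA HB.
  apply (def_ext HDef (fun s => ~ (A s /\ ~ B s))).
  - intro s; split; [intros h a; apply NNPP; tauto | tauto].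
  - apply (def_not HDef), (def_and HDef); [|apply (def_not HDef)]; assumption.
Qed.

Lemma def_forall A i : Def A -> Def (fun s => forall g, A (upd s i g)).
Proof.
  intro HA.
  apply (def_ext HDef (fun s => ~ exists g, ~ A (upd s i g))).
  - intro s; split.
    + intros h g; apply NNPP; intro hn; apply h; exists g; exact hn.
    + intros h [g hg]; apply hg, h.
  - apply (def_not HDef), (def_exists HDef (fun s => ~ A s) i), (def_not HDef), HA.
Qed.

(* Existentially quantify the old variables [i], [j] and equate them with [k], [l]. *)
Lemma def_rename (R : G -> G -> Prop) i j k l :
  i <> j -> k <> i -> k <> j -> l <> i -> l <> j ->
  Def (fun s => R (s i) (s j)) -> Def (fun s => R (s k) (s l)).
Proof.
  intros hij hki hkj hli hlj HR.
  set (P := fun s : nat -> G => s i = s k /\ s j = s l /\ R (s i) (s j)).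
  apply (def_ext HDef (fun s => exists g1 g2, P (upd (upd s i g1) j g2))).
  - intro s; unfold P, upd.
    rewrite <- !Nat.eqb_neq in hij, hki, hkj, hli, hlj.
    rewrite (Nat.eqb_sym j i), hij, hki, hkj, hli, hlj, !Nat.eqb_refl.
    split.
    + intros [g1 [g2 [-> [-> r]]]]; exact r.
    + intro r; exists (s k), (s l); auto.
  - apply (def_exists HDef (fun s => exists g2, P (upd s j g2)) i).
    apply (def_exists HDef P j).
    apply (def_and HDef); [apply (def_eq HDef)|].
    apply (def_and HDef); [apply (def_eq HDef)|exact HR].
Qed.

Lemma def_binrel_at (R : G -> G -> Prop) k l :
  k <> l -> Def (fun s => R (s 0) (s 1)) -> Def (fun s => R (s k) (s l)).
Proof.
  intros hkl HR.
  apply (@def_rename R (k + l + 1) (k + l + 2)); try lia.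
  apply (@def_rename R 0 1); [lia .. | exact HR].
Qed.

Lemma def_subst_const_l (R : G -> G -> Prop) c k i :
  k <> i -> Def (fun s => R (s k) (s i)) -> Def (fun s => R c (s i)).
Proof.
  intros hki HR.
  set (P := fun s : nat -> G => s k = c /\ R (s k) (s i)).
  apply (def_ext HDef (fun s => exists g, P (upd s k g))).
  - intro s; unfold P, upd; rewrite Nat.eqb_refl.
    assert (hik : (i =? k) = false) by (apply Nat.eqb_neq; auto).
    rewrite hik; split; [intros [g [-> r]]; exact r | intro r; exists c; auto].
  - apply (def_exists HDef P); apply (def_and HDef); [apply (def_const HDef) | exact HR].
Qed.

Lemma def_subst_const_r (R : G -> G -> Prop) c k i :
  k <> i -> Def (fun s => R (s i) (s k)) -> Def (fun s => R (s i) c).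
Proof. exact (@def_subst_const_l (fun x y => R y x) c k i). Qed.

Lemma def_le i j : Def (fun s => le_of lt (s i) (s j)).
Proof. apply def_or; [apply (def_lt HDef) | apply (def_eq HDef)]. Qed.

End Definability.

Section Order.
Variables (G : Type) (add : G -> G -> G) (opp : G -> G) (zero : G)
  (lt : G -> G -> Prop).
Hypothesis HG : DOAG add opp zero lt.

Lemma doag_lt_trans x y z : lt x y -> lt y z -> lt x z.
Proof. exact (doag_trans HG x y z). Qed.

Lemma le_of_trans x y z : le_of lt x y -> le_of lt y z -> le_of lt x z.
Proof.
  intros [h| ->] [h'| <-]; [left; exact (doag_lt_trans h h') | left | left | right]; auto.
Qed.

Lemma lt_le_of_trans x y z : lt x y -> le_of lt y z -> lt x z.
Proof. intros h [h'| <-]; [exact (doag_lt_trans h h') | exact h]. Qed.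

Lemma le_of_lt_trans x y z : le_of lt x y -> lt y z -> lt x z.
Proof. intros [h| ->] h'; [exact (doag_lt_trans h h') | exact h']. Qed.

Lemma le_of_antisym x y : le_of lt x y -> le_of lt y x -> x = y.
Proof.
  intros [h| ->] [h'|h']; auto.
  destruct (doag_irrefl HG _ (doag_lt_trans h h')).
Qed.

Lemma lt_of_not_le_of x y : ~ le_of lt x y -> lt y x.
Proof. unfold le_of; intro h; destruct (doag_total HG x y) as [|[|]]; tauto. Qed.

Lemma not_le_of_lt x y : lt y x -> ~ le_of lt x y.
Proof. intros h h'; exact (doag_irrefl HG _ (lt_le_of_trans h h')). Qed.

Lemma le_of_upper_bound x y : exists z, le_of lt x z /\ le_of lt y z.
Proof.
  destruct (doag_total HG x y) as [h|[->|h]].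
  - exists y; split; [left | right]; auto.
  - exists y; split; right; auto.
  - exists x; split; [right | left]; auto.
Qed.

End Order.

Section Coverable.
Variables (G : Type) (add : G -> G -> G) (opp : G -> G) (zero : G)
  (lt : G -> G -> Prop) (Def : ((nat -> G) -> Prop) -> Prop)
  (psi phi : G -> G -> Prop) (a : G).
Hypothesis HG : DOAG add opp zero lt.
Hypothesis Hpsi_mono : forall t1 t2 y, lt t1 t2 -> psi t1 y -> psi t2 y.
Hypothesis Hpsi_cover : forall y, exists t, psi t y.

Definition covered_upto (t x : G) : Prop :=
  forall y, le_of lt a y -> le_of lt y x -> exists u, psi t u /\ phi u y.

(* Points below [a] are included so that the set is downward closed. *)
Definition coverable (x : G) : Prop := lt x a \/ exists t, covered_upto t x.

Lemma covered_upto_index_mono t t' x :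
  le_of lt t t' -> covered_upto t x -> covered_upto t' x.
Proof.
  intros htt' hc y h1 h2; destruct (hc y h1 h2) as [u [hu hphi]].
  exists u; split; [destruct htt' as [h| <-]; eauto | exact hphi].
Qed.

Lemma covered_upto_antitone t x x' :
  le_of lt x' x -> covered_upto t x -> covered_upto t x'.
Proof. intros hx hc y h1 h2; apply hc; [exact h1 | exact (le_of_trans HG h2 hx)]. Qed.

Lemma coverable_down x y : coverable y -> le_of lt x y -> coverable x.
Proof.
  intros [h|[t h]] hxy.
  - left; exact (le_of_lt_trans HG hxy h).
  - right; exists t; exact (covered_upto_antitone hxy h).
Qed.

Lemma coverable_start : (exists u, phi u a) -> coverable a.
Proof.
  intros [u hu]; destruct (Hpsi_cover u) as [t ht].
  right; exists t; intros y h1 h2.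
  rewrite <- (le_of_antisym HG h1 h2); exists u; auto.
Qed.

Lemma coverable_le_of_not x b : ~ coverable b -> coverable x -> le_of lt x b.
Proof.
  intros nb hx; apply NNPP; intro hn.
  exact (nb (coverable_down hx (or_introl (lt_of_not_le_of HG hn)))).
Qed.

(* Merge the cover of [[a, x]] with [phi u]; by monotonicity both index
   sets lie in a single [psi T]. *)
Lemma coverable_past_open x c d u :
  coverable x -> lt c x -> (forall y, lt c y -> lt y d -> phi u y) ->
  forall z, lt z d -> coverable z.
Proof.
  intros Cx hcx hphi z hzd.
  destruct (Hpsi_cover u) as [t1 ht1].
  assert (on_tail : forall t, le_of lt t1 t ->
            forall y, lt x y -> le_of lt y z -> exists u, psi t u /\ phi u y).
  { intros t hT y hxy hyz; exists u; split.
    - destruct hT as [h| <-]; eauto.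
    - apply hphi; [exact (doag_lt_trans HG hcx hxy) | exact (le_of_lt_trans HG hyz hzd)]. }
  destruct Cx as [hxa|[t hct]].
  - right; exists t1; intros y h1 h2.
    exact (on_tail t1 (or_intror eq_refl) y (lt_le_of_trans HG hxa h1) h2).
  - destruct (le_of_upper_bound HG t t1) as [T [hT hT1]].
    right; exists T; intros y h1 h2.
    destruct (classic (le_of lt y x)) as [hyx|hyx].
    + exact (covered_upto_index_mono hT hct h1 hyx).
    + exact (on_tail T hT1 y (lt_of_not_le_of HG hyx) h2).
Qed.

Lemma coverable_no_open_lub m u :
  is_lub lt coverable m -> is_open lt (phi u) -> phi u m -> False.
Proof.
  intros [Hub Hleast] Hopen hm.
  destruct (Hopen m hm) as [c [d [hcm [hmd hphi]]]].
  assert (hx : exists x, coverable x /\ lt c x).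
  { apply NNPP; intro hn; apply (not_le_of_lt HG hcm), Hleast.
    intros x hx; apply NNPP; intro hxc.
    apply hn; exists x; split; [exact hx | exact (lt_of_not_le_of HG hxc)]. }
  destruct hx as [x [Cx hcx]].
  destruct (doag_dense HG _ _ hmd) as [z [hmz hzd]].
  exact (not_le_of_lt HG hmz (Hub z (coverable_past_open Cx hcx hphi hzd))).
Qed.

Hypothesis HDef : DefStructure add opp lt Def.
Hypothesis Hpsi_def : Def (fun s => psi (s 0) (s 1)).
Hypothesis Hphi_def : Def (fun s => phi (s 0) (s 1)).

(* Variables: [x] is 0, [t] is 1, [y] is 2, [u] is 3. *)
Lemma coverable_definable : def_set Def coverable.
Proof.
  assert (covering_step : Def (fun s => psi (s 1) (s 3) /\ phi (s 3) (s 2))).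
  { apply (def_and HDef); apply (def_binrel_at HDef); auto. }
  assert (covered_at : Def (fun s => le_of lt a (s 2) -> le_of lt (s 2) (s 0) ->
                                   exists g, psi (upd s 3 g 1) (upd s 3 g 3) /\
                                             phi (upd s 3 g 3) (upd s 3 g 2))).
  { apply (def_imp HDef), (def_imp HDef (def_le HDef 2 0)).
    - apply (def_subst_const_l HDef a (k := 4)); [discriminate | apply (def_le HDef)].
    - exact (def_exists HDef _ 3 covering_step). }
  assert (below_a : Def (fun s => lt (s 0) a)).
  { apply (def_subst_const_r HDef a (k := 1)); [discriminate | apply (def_lt HDef)]. }
  exact (def_or HDef below_a
           (def_exists HDef _ 1 (def_forall HDef 2 covered_at))).
Qed.

End Coverable.

Theorem theorem3p5 (G : Type) (add : G -> G -> G) (opp : G -> G) (zero : G)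
    (lt : G -> G -> Prop) (Def : ((nat -> G) -> Prop) -> Prop)
    (HG : DOAG add opp zero lt)
    (HDef : DefStructure add opp lt Def)
    (Hcomplete : definably_complete lt Def)
    (psi : G -> G -> Prop)
    (Hpsi_def : Def (fun s => psi (s 0) (s 1)))
    (Hpsi_pf : forall t, pseudo_finite lt Def (psi t))
    (Hpsi_mono : forall t1 t2 y, lt t1 t2 -> psi t1 y -> psi t2 y)
    (Hpsi_cover : forall y, exists t, psi t y) :
  forall a b, lt a b ->
  forall phi : G -> G -> Prop,
    Def (fun s => phi (s 0) (s 1)) ->
    (forall u, is_open lt (phi u)) ->
    (forall x, le_of lt a x -> le_of lt x b -> exists u, phi u x) ->
    exists t0, forall x, le_of lt a x -> le_of lt x b ->
      exists u, psi t0 u /\ phi u x.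
Proof.
  intros a b hab phi Hphi_def Hopen Hcov.
  destruct (classic (coverable lt psi phi a b)) as [[hba|[t hb]]|nb].
  - destruct (doag_irrefl HG _ (doag_lt_trans HG hba hab)).
  - exists t; exact hb.
  - exfalso.
    assert (ha : coverable lt psi phi a a).
    { apply (coverable_start HG Hpsi_cover), Hcov; [right | left]; auto. }
    destruct (classic (exists m, is_lub lt (coverable lt psi phi a) m)) as [[m hm]|nlub].
    + assert (ham : le_of lt a m) by (apply hm; exact ha).
      assert (hmb : le_of lt m b) by (apply hm; intro x; exact (coverable_le_of_not HG nb)).
      destruct (Hcov m ham hmb) as [u hu].
      exact (coverable_no_open_lub HG Hpsi_mono Hpsi_cover hm (Hopen u) hu).
    + apply (Hcomplete _ (coverable_definable a HDef Hpsi_def Hphi_def)).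
      repeat split; eauto.
      intros x y hy hxy; exact (coverable_down HG hy hxy).
Qed.
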